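(* For every integer $k\ge2$, $$\max_{n\ge1}\frac{\log{\mathfrak t}_k(n)}{n}=\frac12\log\binom{k+1}{2}.$$
   Context: For a positive integer $n$, ${\mathfrak t}_k(n)$ is the number of ordered $k$-tuples $({\mathfrak d}_1,\dots,{\mathfrak d}_k)$ of nonzero Gaussian integers, each taken up to associates (multiplication by $\pm1,\pm i$), such that ${\mathfrak d}_1\cdots{\mathfrak d}_k$ is associated to $n$; equivalently, the number of ordered $k$-tuples of ideals of $\mathbb{Z}[i]$ whose product is $n\mathbb{Z}[i]$. *)

(* Gaussian integers are pairs (a,b) : Z*Z standing for a+bi. *)
From Stdlib Require Import Reals ZArith List Bool.
Import ListNotations.

Definition gauss := (Z * Z)%type.

Definition gmul (z w : gauss) : gauss :=
  let '(a, b) := z in let '(c, d) := w in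
  (a * c - b * d, a * d + b * c)%Z.

Definition gone : gauss := (1%Z, 0%Z).

Definition gunits : list gauss := [(1,0); (-1,0); (0,1); (0,-1)]%Z.

Definition geqb (z w : gauss) : bool :=
  Z.eqb (fst z) (fst w) && Z.eqb (snd z) (snd w).

Definition gassocb (z w : gauss) : bool :=
  existsb (fun u => geqb (gmul u z) w) gunits.

Definition gprod (l : list gauss) : gauss := fold_right gmul gone l.

(* Canonical representative of an associate class of a nonzero Gaussian
   integer: a > 0 and b >= 0 (every nonzero class has exactly one). *)
Definition gnormalizedb (z : gauss) : bool :=
  (0 <? fst z)%Z && (0 <=? snd z)%Z.

(* Normalized Gaussian integers a+bi with a,b <= n.  Any divisor d of n
   has N(d) <= n^2, hence |a|,|b| <= n, so this box contains all the
   representatives that can occur in a factorization of n. *)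
Definition gcands (n : nat) : list gauss :=
  filter gnormalizedb
    (list_prod (map Z.of_nat (seq 0 (S n))) (map Z.of_nat (seq 0 (S n)))).

Fixpoint tuples {A : Type} (s : list A) (k : nat) : list (list A) :=
  match k with
  | O => [nil]
  | S k' => flat_map (fun x => map (cons x) (tuples s k')) s
  end.

(* t_k(n): number of ordered k-tuples of nonzero Gaussian integers up to
   associates whose product is associated to n. *)
Definition frak_t (k n : nat) : nat :=
  length (filter (fun l => gassocb (gprod l) (Z.of_nat n, 0%Z))
                 (tuples (gcands n) k)).

(* Since [2 = -i (1+i)^2], the factorizations of 2 are those of [(1+i)^2], so
   [t_k(2) = binom(k+1, 2)] and the value [1/2 log binom(k+1, 2)] is attained at [n = 2].

   For the upper bound, dividing the first factor divisible by a prime [p] by [p] maps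
   factorizations of [p w] injectively to pairs (index, factorization of [w]); hence
   [t_k(p w) <= k t_k(w)] and [t_k(n) <= k^Omega(n)].  Writing [n = 2^a (2h+1)], the
   prime [1+i] occurs [2a] times, and since every prime of odd norm has norm at least
   5 while [N(2h+1) = (2h+1)^2 < 5^(h+1)], the odd part contributes at most [h] primes.
   Thus [t_k(n) <= k^(2a+h)], and for [n <> 2, 4] the estimates [4(2a+h) <= 3n] and
   [k^3 <= binom(k+1,2)^2] give [t_k(n)^2 <= binom(k+1,2)^n].  For [n = 4] the exact
   value [t_k(4) = binom(k+3, 4) <= binom(k+1, 2)^2] is computed. *)

From Stdlib Require Import Reals.
Open Scope R_scope.
From Stdlib Require Import ZArith List Lia Lra Bool Arith Classical.
Import ListNotations.
Open Scope Z_scope.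

(** * Arithmetic in Z[i] *)

Definition gzero : gauss := (0, 0).
Definition gadd (z w : gauss) : gauss := (fst z + fst w, snd z + snd w).
Definition gopp (z : gauss) : gauss := (- fst z, - snd z).
Definition gconj (z : gauss) : gauss := (fst z, - snd z).
Definition gN (z : gauss) : Z := fst z * fst z + snd z * snd z.

Definition gdv (d z : gauss) : Prop := exists c, z = gmul d c.
Definition assoc (z w : gauss) : Prop := exists u, In u gunits /\ gmul u z = w.

Ltac gauss_unfold :=
  repeat match goal with z : gauss |- _ => destruct z | z : (Z * Z)%type |- _ => destruct z end;
  unfold gmul, gadd, gopp, gconj, gone, gzero, gN in *; cbn [fst snd] in *.

Lemma gauss_ring :
  ring_theory gzero gone gadd gmul (fun a b => gadd a (gopp b)) gopp (@eq gauss).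
Proof. constructor; intros; gauss_unfold; f_equal; ring. Qed.
Add Ring GaussRing : gauss_ring.

Lemma gN_mul a b : gN (gmul a b) = gN a * gN b.
Proof. gauss_unfold; ring. Qed.

Lemma gN_nonneg a : 0 <= gN a.
Proof. gauss_unfold; nia. Qed.

Lemma gN_eq0 a : gN a = 0 -> a = gzero.
Proof. gauss_unfold; intros; f_equal; nia. Qed.

Lemma gN_pos a : a <> gzero -> 0 < gN a.
Proof.
  intros Ha. destruct (Z.eq_dec (gN a) 0) as [E|E].
  - now apply gN_eq0 in E.
  - pose proof (gN_nonneg a); lia.
Qed.

Lemma gN_ne3 z : gN z <> 3.
Proof.
  destruct z as [a b]. unfold gN. cbn [fst snd]. intros H.
  assert (-1 <= a <= 1 /\ -1 <= b <= 1) as [[] []] by nia.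
  assert (a * a <= 1 /\ b * b <= 1) by nia. lia.
Qed.

Lemma gmul_conj a : gmul a (gconj a) = (gN a, 0).
Proof. gauss_unfold; f_equal; ring. Qed.

Lemma gmul_reg_l z a b : z <> gzero -> gmul z a = gmul z b -> a = b.
Proof.
  intros Hz E. assert (HN := gN_pos z Hz).
  assert (E' : gmul (gN z, 0) a = gmul (gN z, 0) b).
  { rewrite <- gmul_conj. transitivity (gmul (gconj z) (gmul z a)); [ring|].
    rewrite E. ring. }
  gauss_unfold. injection E'; intros. f_equal; nia.
Qed.

Lemma gassocb_iff z w : gassocb z w = true <-> assoc z w.
Proof.
  unfold gassocb, assoc. rewrite existsb_exists.
  split; intros [u [Hu H]]; exists u; split; auto.
  - unfold geqb in H. apply andb_true_iff in H as [H1 H2].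
    apply Z.eqb_eq in H1, H2. destruct (gmul u z), w; cbn in *; congruence.
  - rewrite H. unfold geqb. now rewrite !Z.eqb_refl.
Qed.

Lemma gunits_N1 u : In u gunits <-> gN u = 1.
Proof.
  split.
  - cbn. intros H. repeat destruct H as [H|H]; subst; reflexivity || contradiction.
  - destruct u as [a b]. unfold gN. cbn [fst snd]. intros H.
    assert (a = 0 /\ (b = 1 \/ b = -1) \/ b = 0 /\ (a = 1 \/ a = -1)) by nia.
    cbn. intuition subst; tauto.
Qed.

Lemma gunit_inv u : In u gunits -> exists v, In v gunits /\ gmul v u = gone.
Proof.
  rewrite gunits_N1. intros Hu. exists (gconj u). split.
  - apply gunits_N1. rewrite <- Hu. gauss_unfold. ring.
  - transitivity (gmul u (gconj u)); [ring|]. now rewrite gmul_conj, Hu.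
Qed.

Lemma gunit_mul u v : In u gunits -> In v gunits -> In (gmul u v) gunits.
Proof. rewrite !gunits_N1, gN_mul. lia. Qed.

Lemma assoc_refl z : assoc z z.
Proof. exists gone. split; [cbn; tauto | ring]. Qed.

Lemma assoc_sym z w : assoc z w -> assoc w z.
Proof.
  intros [u [Hu <-]]. destruct (gunit_inv u Hu) as [v [Hv Hvu]].
  exists v. split; auto. transitivity (gmul (gmul v u) z); [ring|]. rewrite Hvu. ring.
Qed.

Lemma assoc_trans x y z : assoc x y -> assoc y z -> assoc x z.
Proof.
  intros [u [Hu <-]] [v [Hv <-]]. exists (gmul v u).
  split; [now apply gunit_mul | ring].
Qed.

Lemma assoc_mul_l x y z : assoc y z -> assoc (gmul x y) (gmul x z).
Proof. intros [u [Hu <-]]. exists u. split; [auto | ring]. Qed.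

Lemma assoc_reg_l p a b : p <> gzero -> assoc (gmul p a) (gmul p b) -> assoc a b.
Proof.
  intros Hp [u [Hu H]]. exists u. split; auto.
  apply (gmul_reg_l p); auto. rewrite <- H. ring.
Qed.

Lemma assoc_gN x y : assoc x y -> gN x = gN y.
Proof. intros [u [Hu <-]]. rewrite gN_mul. apply gunits_N1 in Hu. lia. Qed.

Lemma assoc_gdv a b : assoc a b -> gdv a b.
Proof. intros [u [_ <-]]. exists u. ring. Qed.

Lemma gdv_trans a b c : gdv a b -> gdv b c -> gdv a c.
Proof. intros [x ->] [y ->]. exists (gmul x y). ring. Qed.

Definition gnormalize (z : gauss) : gauss :=
  if gnormalizedb z then z
  else if gnormalizedb (gmul (0, -1) z) then gmul (0, -1) z
  else if gnormalizedb (gmul (-1, 0) z) then gmul (-1, 0) z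
  else gmul (0, 1) z.

Lemma gnormalizedb_spec z :
  gnormalizedb z = true <-> 0 < fst z /\ 0 <= snd z.
Proof. unfold gnormalizedb. now rewrite andb_true_iff, Z.ltb_lt, Z.leb_le. Qed.

Lemma gnormalized_nz z : gnormalizedb z = true -> z <> gzero.
Proof. rewrite gnormalizedb_spec. intros H E. subst. cbn in H. lia. Qed.

Lemma gnormalize_spec z : z <> gzero ->
  gnormalizedb (gnormalize z) = true /\ assoc z (gnormalize z).
Proof.
  intros Hz. unfold gnormalize.
  destruct (gnormalizedb z) eqn:E1; [split; auto; apply assoc_refl|].
  destruct (gnormalizedb (gmul (0, -1) z)) eqn:E2;
    [split; auto; exists (0, -1); cbn; tauto|].
  destruct (gnormalizedb (gmul (-1, 0) z)) eqn:E3;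
    [split; auto; exists (-1, 0); cbn; tauto|].
  split; [|exists (0, 1); cbn; tauto].
  apply not_true_iff_false in E1, E2, E3. rewrite gnormalizedb_spec in *.
  destruct z as [a b]. unfold gmul in *. cbn [fst snd] in *.
  assert (a <> 0 \/ b <> 0) by (destruct (Z.eq_dec a 0), (Z.eq_dec b 0); subst; auto).
  lia.
Qed.

Lemma gnormalized_assoc_eq z w :
  gnormalizedb z = true -> gnormalizedb w = true -> assoc z w -> z = w.
Proof.
  rewrite !gnormalizedb_spec. intros Hz Hw [u [Hu <-]].
  destruct z as [a b]. cbn [fst snd] in Hz.
  repeat destruct Hu as [Hu|Hu]; try contradiction; subst;
    unfold gmul in *; cbn [fst snd] in *; f_equal; lia.
Qed.

(** * Division with remainder and Euclid's lemma *)

(* [gdivb x w] tests [x | w] by checking that both coordinates of [w * conj x]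
   are divisible by [N x]; the quotient [gq w x] is then exact. *)
Definition gdivb (x w : gauss) : bool :=
  let p := gmul w (gconj x) in ((fst p mod gN x) =? 0) && ((snd p mod gN x) =? 0).

Definition gq (w x : gauss) : gauss :=
  let p := gmul w (gconj x) in (fst p / gN x, snd p / gN x).

Lemma gdivb_quot x w : x <> gzero -> gdivb x w = true -> w = gmul x (gq w x).
Proof.
  intros Hx H. assert (HN := gN_pos x Hx). unfold gdivb in H.
  apply andb_true_iff in H as [H1 H2]. apply Z.eqb_eq in H1, H2.
  set (p := gmul w (gconj x)) in *.
  assert (E1 : fst p = gN x * (fst p / gN x)) by (apply Z_div_exact_2; lia).
  assert (E2 : snd p = gN x * (snd p / gN x)) by (apply Z_div_exact_2; lia).
  apply (gmul_reg_l (gconj x)).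
  { intros E. apply Hx. destruct x as [a b]. unfold gconj, gzero in *. cbn [fst snd] in *.
    injection E; intros. f_equal; lia. }
  transitivity p; [unfold p; ring|].
  transitivity (gmul (gN x, 0) (gq w x)); [|rewrite <- gmul_conj; ring].
  unfold gq. fold p. destruct p as [p1 p2]. cbn [fst snd] in *.
  rewrite E1, E2 at 1. unfold gmul. f_equal; ring.
Qed.

Lemma gdivb_iff x w : x <> gzero -> gdivb x w = true <-> gdv x w.
Proof.
  intros Hx. split; [intros H; exists (gq w x); now apply gdivb_quot|].
  intros [c ->]. assert (HN := gN_pos x Hx). unfold gdivb.
  replace (gmul (gmul x c) (gconj x)) with (gmul (gN x, 0) c)
    by (rewrite <- gmul_conj; ring).
  destruct c as [c1 c2]. unfold gmul. cbn [fst snd].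
  apply andb_true_iff. split; apply Z.eqb_eq.
  - replace (gN x * c1 - 0 * c2) with (c1 * gN x) by ring. apply Z_mod_mult.
  - replace (gN x * c2 + 0 * c1) with (c2 * gN x) by ring. apply Z_mod_mult.
Qed.

Lemma gq_nz x w : x <> gzero -> w <> gzero -> gdivb x w = true -> gq w x <> gzero.
Proof.
  intros Hx Hw H E. apply gdivb_quot in H; auto. apply Hw. rewrite H, E. ring.
Qed.

(* Round the exact quotient [a conj b / N b] coordinatewise to the nearest integer. *)
Lemma gdiv_rem a b : b <> gzero -> exists q, gN (gadd a (gopp (gmul b q))) < gN b.
Proof.
  intros Hb. assert (HN := gN_pos b Hb).
  set (N := gN b) in *. set (p := gmul a (gconj b)).
  set (q1 := (2 * fst p + N) / (2 * N)). set (q2 := (2 * snd p + N) / (2 * N)).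
  exists (q1, q2). set (r := gadd a (gopp (gmul b (q1, q2)))).
  assert (D1 := Z.div_mod (2 * fst p + N) (2 * N) ltac:(lia)).
  assert (M1 := Z.mod_pos_bound (2 * fst p + N) (2 * N) ltac:(lia)).
  assert (D2 := Z.div_mod (2 * snd p + N) (2 * N) ltac:(lia)).
  assert (M2 := Z.mod_pos_bound (2 * snd p + N) (2 * N) ltac:(lia)).
  fold q1 in D1. fold q2 in D2.
  assert (HrN : gN r * N = gN (gadd p (gopp (gmul (N, 0) (q1, q2))))).
  { assert (Hc : gN (gconj b) = N) by (unfold N, gN, gconj; cbn [fst snd]; ring).
    rewrite <- Hc at 1. rewrite <- gN_mul. f_equal. unfold r, p, N. rewrite <- gmul_conj. ring. }
  destruct p as [p1 p2]. cbn [fst snd] in *.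
  set (m1 := (2 * p1 + N) mod (2 * N)) in *. set (m2 := (2 * p2 + N) mod (2 * N)) in *.
  assert (HrN' : gN r * N = (p1 - N * q1) * (p1 - N * q1) + (p2 - N * q2) * (p2 - N * q2)).
  { rewrite HrN. unfold gadd, gopp, gmul, gN; cbn [fst snd]. ring. }
  assert ((m1 - N) * (m1 - N) <= N * N) by nia.
  assert ((m2 - N) * (m2 - N) <= N * N) by nia.
  assert (4 * (gN r * N) <= 2 * (N * N)) by nia.
  nia.
Qed.

Lemma gbezout a b : exists g u v, g = gadd (gmul u a) (gmul v b) /\ gdv g a /\ gdv g b.
Proof.
  remember (Z.to_nat (gN b)) as m eqn:Hm. revert a b Hm.
  induction m as [m IH] using (well_founded_induction lt_wf). intros a b Hm.
  destruct (Z.eq_dec (gN b) 0) as [Hb|Hb].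
  - apply gN_eq0 in Hb. subst b. exists a, gone, gzero.
    split; [ring|]. split; [exists gone; ring | exists gzero; ring].
  - assert (Hb' : b <> gzero) by (intros ->; now apply Hb).
    destruct (gdiv_rem a b Hb') as [q Hq].
    set (r := gadd a (gopp (gmul b q))) in *.
    assert (Hlt : (Z.to_nat (gN r) < m)%nat) by (pose proof (gN_nonneg r); lia).
    destruct (IH _ Hlt b r eq_refl) as [g [u [v [Hg [[x Hx] [y Hy]]]]]].
    exists g, v, (gadd u (gopp (gmul v q))). split; [rewrite Hg; unfold r; ring|].
    split; [|now exists x].
    exists (gadd (gmul x q) y).
    replace a with (gadd (gmul b q) r) by (unfold r; ring). rewrite Hx at 1. rewrite Hy. ring.
Qed.

Definition irred (p : gauss) : Prop :=
  1 < gN p /\ forall d, gdv d p -> gN d = 1 \/ gN d = gN p.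

Lemma irred_nz p : irred p -> p <> gzero.
Proof. intros [H _] ->. cbn in H. lia. Qed.

Lemma irred_ndv_one p : irred p -> ~ gdv p gone.
Proof.
  intros [H _] [c Hc]. assert (E : gN gone = gN p * gN c) by (rewrite Hc at 1; apply gN_mul).
  change (gN gone) with 1 in E. pose proof (gN_nonneg c).
  destruct (Z.eq_dec (gN c) 0) as [E0|E0]; [rewrite E0 in E|]; nia.
Qed.

Lemma euclid p a b : irred p -> gdv p (gmul a b) -> gdv p a \/ gdv p b.
Proof.
  intros [Hp1 Hp] [m Hm].
  destruct (gbezout p a) as [g [u [v [Hg [Hgp [e He]]]]]].
  destruct (Hp g Hgp) as [H1|H1].
  - right. apply gunits_N1, gunit_inv in H1 as [g' [_ Hg']].
    exists (gadd (gmul g' (gmul u b)) (gmul g' (gmul v m))).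
    transitivity (gmul (gmul g' g) b); [rewrite Hg'; ring|]. rewrite Hg.
    transitivity (gadd (gmul p (gmul g' (gmul u b))) (gmul g' (gmul v (gmul a b)))); [ring|].
    rewrite Hm. ring.
  - left. destruct Hgp as [c Hc].
    assert (HN : gN p = gN g * gN c) by (rewrite Hc; apply gN_mul).
    assert (Hc1 : gN c = 1) by nia.
    apply gunits_N1, gunit_inv in Hc1 as [c' [_ Hc']].
    exists (gmul c' e). rewrite He, Hc.
    transitivity (gmul (gmul g (gmul c' c)) e); [rewrite Hc'; ring | ring].
Qed.

Lemma irred_exists w : 1 < gN w -> exists p, irred p /\ gdv p w.
Proof.
  remember (Z.to_nat (gN w)) as m eqn:Hm. revert w Hm.
  induction m as [m IH] using (well_founded_induction lt_wf). intros w Hm Hw.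
  destruct (classic (irred w)) as [Hi|Hi]; [exists w; split; [|exists gone; ring]; auto|].
  assert (exists d, gdv d w /\ gN d <> 1 /\ gN d <> gN w) as [d [[c Hc] [H1 H2]]].
  { apply NNPP. intros Hn. apply Hi. split; auto. intros d Hd.
    destruct (Z.eq_dec (gN d) 1); auto. destruct (Z.eq_dec (gN d) (gN w)); auto.
    exfalso. apply Hn. now exists d. }
  assert (HN : gN w = gN d * gN c) by (rewrite Hc; apply gN_mul).
  pose proof (gN_nonneg d). pose proof (gN_nonneg c).
  assert (gN d <> 0 /\ gN c <> 0) as [] by (split; intros E; rewrite E in HN; lia).
  assert (gN c <> 1) by (intros E; rewrite E in HN; lia).
  assert (Hd : 1 < gN d < gN w) by nia.
  destruct (IH (Z.to_nat (gN d)) ltac:(lia) d eq_refl ltac:(lia)) as [p [Hp Hpd]].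
  exists p. split; auto. apply (gdv_trans p d w); auto. now exists c.
Qed.

Definition one_plus_i : gauss := (1, 1).

Lemma irred_one_plus_i : irred one_plus_i.
Proof.
  split; [reflexivity|]. intros d [c Hc].
  assert (E : 2 = gN d * gN c) by (change 2 with (gN one_plus_i); rewrite Hc at 1; apply gN_mul).
  pose proof (gN_nonneg d). pose proof (gN_nonneg c). change (gN one_plus_i) with 2.
  assert (gN c <> 0) by (intros E'; rewrite E' in E; lia).
  destruct (Z.eq_dec (gN d) 1); [left | right]; nia.
Qed.

(* A prime dividing an element of odd norm has odd norm, and no norm equals 3. *)
Lemma irred_odd_gN_ge5 p w : irred p -> gdv p w -> Z.odd (gN w) = true -> 5 <= gN p.
Proof.
  intros [Hp _] [c ->] Ho. rewrite gN_mul, Z.odd_mul in Ho.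
  apply andb_true_iff in Ho as [Ho _].
  assert (gN p <> 2 /\ gN p <> 4) by (split; intros E; rewrite E in Ho; discriminate).
  pose proof (gN_ne3 p). lia.
Qed.

(** * Counting factorizations *)

Lemma In_tuples {A} (S : list A) k l :
  In l (tuples S k) <-> length l = k /\ (forall x, In x l -> In x S).
Proof.
  revert l. induction k as [|k IH]; intros l; cbn.
  - split; [intros [<-|[]]; split; [reflexivity | intros x []]|].
    intros [H _]. destruct l; [auto | discriminate].
  - rewrite in_flat_map. split.
    + intros [x [Hx Hl]]. apply in_map_iff in Hl as [r [<- Hr]].
      apply IH in Hr as [H1 H2]. cbn. split; [congruence|]. intros y [<-|Hy]; auto.
    + intros [H1 H2]. destruct l as [|x r]; [discriminate|].
      exists x. split; [apply H2; now left|]. apply in_map, IH. cbn in H1.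
      split; [lia|]. intros y Hy. apply H2. now right.
Qed.

Lemma NoDup_flat_map_cons {A} (T : list (list A)) (S : list A) :
  NoDup T -> NoDup S -> NoDup (flat_map (fun x => map (cons x) T) S).
Proof.
  intros HT HS. induction HS as [|x S' Hx HS' IH]; cbn; [constructor|].
  apply NoDup_app; auto.
  - apply NoDup_map_NoDup_ForallPairs; auto. intros a b _ _ E. now injection E.
  - intros l Hl Hl'. apply in_map_iff in Hl as [r [<- _]].
    apply in_flat_map in Hl' as [y [Hy Hm]]. apply in_map_iff in Hm as [r' [E _]].
    injection E as <-. contradiction.
Qed.

Lemma NoDup_tuples {A} (S : list A) k : NoDup S -> NoDup (tuples S k).
Proof.
  intros HS. induction k as [|k IH]; cbn.
  - constructor; [intros [] | constructor].
  - now apply NoDup_flat_map_cons.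
Qed.

Lemma NoDup_list_prod {A B} (l : list A) (l' : list B) :
  NoDup l -> NoDup l' -> NoDup (list_prod l l').
Proof.
  intros H H'. induction H as [|x l Hx Hl IH]; cbn; [constructor|].
  apply NoDup_app; auto.
  - apply NoDup_map_NoDup_ForallPairs; auto. intros a b _ _ E. now injection E.
  - intros [a b] Ha Hb. apply in_map_iff in Ha as [y [E _]]. injection E as <- <-.
    apply in_prod_iff in Hb. tauto.
Qed.

Lemma NoDup_gcands n : NoDup (gcands n).
Proof.
  apply NoDup_filter, NoDup_list_prod;
    apply NoDup_map_NoDup_ForallPairs; try apply seq_NoDup; intros a b _ _ E; lia.
Qed.

Lemma In_gcands n z : In z (gcands n) <->
  gnormalizedb z = true /\ 0 <= fst z <= Z.of_nat n /\ 0 <= snd z <= Z.of_nat n.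
Proof.
  destruct z as [a b]. unfold gcands.
  rewrite filter_In, (@in_prod_iff Z Z), !in_map_iff. cbn [fst snd]. split.
  - intros [[[x [<- Hx]] [y [<- Hy]]] Hn]. apply in_seq in Hx, Hy. split; auto. lia.
  - intros [Hn [Ha Hb]]. split; auto.
    split; [exists (Z.to_nat a) | exists (Z.to_nat b)]; rewrite in_seq; lia.
Qed.

Lemma gcands_nz n z : In z (gcands n) -> z <> gzero.
Proof. intros H. apply In_gcands in H. now apply gnormalized_nz. Qed.

Definition tcount (k n : nat) (w : gauss) : nat :=
  length (filter (fun l => gassocb (gprod l) w) (tuples (gcands n) k)).

Lemma frak_t_tcount k n : frak_t k n = tcount k n (Z.of_nat n, 0).
Proof. reflexivity. Qed.

Lemma gassocb_mul_l x p w : x <> gzero -> w <> gzero ->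
  gassocb (gmul x p) w = if gdivb x w then gassocb p (gnormalize (gq w x)) else false.
Proof.
  intros Hx Hw. destruct (gdivb x w) eqn:E.
  - assert (Hq := gq_nz x w Hx Hw E). apply gdivb_quot in E; auto.
    destruct (gnormalize_spec (gq w x) Hq) as [_ Hn].
    apply eq_true_iff_eq. rewrite !gassocb_iff. split; intros H.
    + apply (assoc_trans _ (gq w x)); auto. apply (assoc_reg_l x); auto. now rewrite <- E.
    + rewrite E. apply assoc_mul_l. apply (assoc_trans _ (gnormalize (gq w x))); auto.
      now apply assoc_sym.
  - apply not_true_iff_false. rewrite gassocb_iff. intros H.
    apply assoc_gdv in H. rewrite (proj2 (gdivb_iff x w Hx)) in E; [discriminate|].
    apply (gdv_trans _ (gmul x p)); auto. now exists p.
Qed.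

Lemma tcount_succ k n w : w <> gzero ->
  tcount (S k) n w = list_sum (map (fun x =>
    if gdivb x w then tcount k n (gnormalize (gq w x)) else 0%nat) (gcands n)).
Proof.
  intros Hw. unfold tcount at 1. cbn [tuples].
  rewrite flat_map_concat_map, <- concat_filter_map, map_map, <- flat_map_concat_map.
  rewrite length_flat_map. f_equal. apply map_ext_in. intros x Hx.
  rewrite filter_map_swap, length_map. cbn [gprod fold_right]. fold gprod.
  assert (Hx0 := gcands_nz n x Hx).
  destruct (gdivb x w) eqn:E.
  - unfold tcount. f_equal. apply filter_ext. intros l. now rewrite (gassocb_mul_l x _ w Hx0 Hw), E.
  - erewrite filter_ext; [|intros l; rewrite (gassocb_mul_l x _ w Hx0 Hw), E; reflexivity].
    induction (tuples (gcands n) k); cbn; auto.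
Qed.

Fixpoint divide_first (p : gauss) (l : list gauss) : nat * list gauss :=
  match l with
  | [] => (0%nat, [])
  | d :: r =>
      if gdivb p d then (0%nat, gnormalize (gq d p) :: r)
      else let '(i, r') := divide_first p r in (S i, d :: r')
  end.

Lemma divide_first_inj p l1 l2 : p <> gzero ->
  (forall x, In x l1 -> gnormalizedb x = true) ->
  (forall x, In x l2 -> gnormalizedb x = true) ->
  divide_first p l1 = divide_first p l2 -> l1 = l2.
Proof.
  intros Hp. revert l2. induction l1 as [|d1 r1 IH]; intros [|d2 r2] H1 H2 E; auto; cbn in E.
  - destruct (gdivb p d2); [discriminate|]. now destruct (divide_first p r2).
  - destruct (gdivb p d1); [discriminate|]. now destruct (divide_first p r1).
  - assert (Hd1 : gnormalizedb d1 = true) by (apply H1; now left).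
    assert (Hd2 : gnormalizedb d2 = true) by (apply H2; now left).
    destruct (gdivb p d1) eqn:E1, (gdivb p d2) eqn:E2.
    + injection E as Hq <-. f_equal. apply gnormalized_assoc_eq; auto.
      assert (Q1 := gq_nz p d1 Hp (gnormalized_nz _ Hd1) E1).
      assert (Q2 := gq_nz p d2 Hp (gnormalized_nz _ Hd2) E2).
      apply gdivb_quot in E1, E2; auto. rewrite E1, E2. apply assoc_mul_l.
      apply (assoc_trans _ (gnormalize (gq d1 p))); [apply gnormalize_spec; auto|].
      rewrite Hq. now apply assoc_sym, gnormalize_spec.
    + now destruct (divide_first p r2).
    + now destruct (divide_first p r1).
    + destruct (divide_first p r1) eqn:F1, (divide_first p r2) eqn:F2.
      injection E as <- <- <-. f_equal.
      apply IH; [intros x Hx; apply H1 | intros x Hx; apply H2 | now rewrite F2];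
        auto using in_cons.
Qed.

(* [N q <= N d <= 2 n^2] and [N p >= 2] give [N q <= n^2], so [q] fits in the box. *)
Lemma gcands_quot n p d q : irred p -> In d (gcands n) -> d = gmul p q ->
  In (gnormalize q) (gcands n).
Proof.
  intros [Hp _] Hd Hq.
  assert (Hq0 : q <> gzero) by (intros ->; apply (gcands_nz n d Hd); rewrite Hq; ring).
  destruct (gnormalize_spec q Hq0) as [Hn Hassoc]. apply assoc_gN in Hassoc.
  apply In_gcands in Hd. apply In_gcands. split; auto.
  assert (E : gN d = gN p * gN q) by (rewrite Hq; apply gN_mul).
  pose proof (gN_nonneg q).
  assert (gN d <= 2 * Z.of_nat n * Z.of_nat n) by (destruct d; unfold gN; cbn [fst snd] in *; nia).
  assert (HqN : gN (gnormalize q) <= Z.of_nat n * Z.of_nat n) by nia.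
  apply gnormalizedb_spec in Hn. destruct (gnormalize q) as [a b].
  unfold gN in HqN. cbn [fst snd] in *. split; split; nia.
Qed.

Lemma divide_first_spec n p l : irred p ->
  (forall x, In x l -> In x (gcands n)) -> gdv p (gprod l) ->
  (fst (divide_first p l) < length l)%nat /\
  (forall x, In x (snd (divide_first p l)) -> In x (gcands n)) /\
  length (snd (divide_first p l)) = length l /\
  assoc (gmul p (gprod (snd (divide_first p l)))) (gprod l).
Proof.
  intros Hp. assert (Hp0 := irred_nz p Hp).
  induction l as [|d r IH]; intros Hl Hdv; [now apply irred_ndv_one in Hdv|].
  cbn. destruct (gdivb p d) eqn:E.
  - assert (Hd0 : d <> gzero) by (apply (gcands_nz n), Hl; now left).
    destruct (gnormalize_spec (gq d p) (gq_nz p d Hp0 Hd0 E)) as [_ Hn].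
    apply gdivb_quot in E; auto. cbn [fst snd length].
    split; [lia|]. split; [|split; [reflexivity|]].
    + intros x [<-|Hx]; [apply (gcands_quot n p d); auto; apply Hl; now left|].
      apply Hl. now right.
    + destruct Hn as [u [Hu Eu]]. apply assoc_sym. exists u. split; auto.
      cbn [gprod fold_right]. rewrite <- Eu, E at 1. ring.
  - assert (Hndv : ~ gdv p d) by (rewrite <- gdivb_iff, E; auto).
    cbn [gprod fold_right] in Hdv. fold gprod in Hdv.
    destruct (euclid p d (gprod r) Hp Hdv) as [H|H]; [contradiction|].
    destruct (IH (fun x Hx => Hl x (or_intror Hx)) H) as [H1 [H2 [H3 [u [Hu Eu]]]]].
    destruct (divide_first p r) as [i r']. cbn [fst snd length gprod fold_right] in *.
    split; [lia|]. split; [|split; [lia|]].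
    + intros x [<-|Hx]; auto. apply Hl. now left.
    + exists u. split; auto. unfold gprod in *. rewrite <- Eu. ring.
Qed.

(* [divide_first p] injects the factorizations of [p w] into
   [{0, ..., k-1} x {factorizations of w}]. *)
Lemma tcount_irred_mul k n p w : irred p ->
  (tcount k n (gmul p w) <= k * tcount k n w)%nat.
Proof.
  intros Hp. assert (Hp0 := irred_nz p Hp). unfold tcount.
  set (L := filter (fun l => gassocb (gprod l) (gmul p w)) (tuples (gcands n) k)).
  set (L' := filter (fun l => gassocb (gprod l) w) (tuples (gcands n) k)).
  rewrite <- (length_map (divide_first p) L).
  replace (k * length L')%nat with (length (list_prod (seq 0 k) L'))
    by now rewrite length_prod, length_seq.
  apply NoDup_incl_length.
  - apply NoDup_map_NoDup_ForallPairs; [|apply NoDup_filter, NoDup_tuples, NoDup_gcands].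
    intros a b Ha Hb E. apply filter_In in Ha as [Ha _], Hb as [Hb _].
    apply In_tuples in Ha as [_ Ha], Hb as [_ Hb].
    apply (divide_first_inj p); auto; intros x Hx; apply (In_gcands n x); auto.
  - intros [i l'] Hm. apply in_map_iff in Hm as [l [Hf Hl]].
    apply filter_In in Hl as [Ht Ha]. apply In_tuples in Ht as [Hlen Hin].
    apply gassocb_iff in Ha.
    assert (Hdv : gdv p (gprod l)).
    { apply (gdv_trans _ (gmul p w)); [now exists w|]. now apply assoc_gdv, assoc_sym. }
    destruct (divide_first_spec n p l Hp Hin Hdv) as [H1 [H2 [H3 H4]]].
    rewrite Hf in H1, H2, H3, H4. cbn [fst snd] in *.
    apply in_prod_iff. split; [apply in_seq; lia|].
    apply filter_In. split; [apply In_tuples; split; auto; lia|].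
    apply gassocb_iff, (assoc_reg_l p); auto. now apply (assoc_trans _ (gprod l)).
Qed.

Lemma tcount_unit k n w : gN w = 1 -> (tcount k n w <= 1)%nat.
Proof.
  intros Hw. unfold tcount.
  set (L := filter (fun l => gassocb (gprod l) w) (tuples (gcands n) k)).
  assert (HL : forall l, In l L -> l = repeat gone k).
  { intros l Hl. apply filter_In in Hl as [Ht Ha]. apply In_tuples in Ht as [<- Hin].
    apply gassocb_iff, assoc_gN in Ha. rewrite Hw in Ha.
    induction l as [|d r IH]; [reflexivity|]. cbn [gprod fold_right] in Ha. fold gprod in Ha.
    rewrite gN_mul in Ha. apply Z.eq_mul_1_nonneg in Ha as Hd; [|apply gN_nonneg].
    assert (Hn := proj1 (proj1 (In_gcands n d) (Hin d (or_introl eq_refl)))).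
    cbn. f_equal; [|apply IH; [intros x Hx; apply Hin; now right | tauto]].
    apply gnormalizedb_spec in Hn. destruct d as [a b]. unfold gN in Hd. cbn [fst snd] in *.
    unfold gone. f_equal; nia. }
  assert (HND : NoDup L) by apply NoDup_filter, NoDup_tuples, NoDup_gcands.
  destruct L as [|a [|b L0]]; cbn; auto. exfalso.
  inversion HND as [|? ? Hab]. apply Hab. left. rewrite (HL a), (HL b); cbn; auto.
Qed.

(** * Bounding t_k(n) by powers of k *)

Lemma odd_gN_split v : Z.odd (gN v) = true -> gN v <> 1 ->
  exists p v', irred p /\ v = gmul p v' /\ Z.odd (gN v') = true /\ 5 * gN v' <= gN v.
Proof.
  intros Ho H1.
  assert (Hv : 1 < gN v).
  { pose proof (gN_nonneg v). assert (gN v <> 0) by (intros E; now rewrite E in Ho). lia. }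
  destruct (irred_exists v Hv) as [p [Hp [v' Hv']]].
  assert (H5 := irred_odd_gN_ge5 p v Hp (ex_intro _ v' Hv') Ho).
  assert (HN : gN v = gN p * gN v') by (rewrite Hv'; apply gN_mul).
  rewrite HN, Z.odd_mul in Ho. apply andb_true_iff in Ho as [_ Ho'].
  exists p, v'. split; [exact Hp|]. split; [exact Hv'|]. split; [exact Ho'|].
  pose proof (gN_nonneg v'). nia.
Qed.

Lemma tcount_odd_le k n t v : (1 <= k)%nat ->
  Z.odd (gN v) = true -> gN v < 5 ^ Z.of_nat (S t) -> (tcount k n v <= k ^ t)%nat.
Proof.
  intros Hk.
  assert (Hpow : forall e, (1 <= k ^ e)%nat) by (intros e; pose proof (Nat.pow_nonzero k e); lia).
  revert v. induction t as [|t IH]; intros v Ho Hlt.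
  all: destruct (Z.eq_dec (gN v) 1) as [H1|H1];
    [apply (Nat.le_trans _ 1); [now apply tcount_unit | apply Hpow]|].
  all: destruct (odd_gN_split v Ho H1) as [p [v' [Hp [-> [Ho' Hle]]]]].
  - assert (gN v' <> 0) by (intros E; now rewrite E in Ho'). pose proof (gN_nonneg v').
    cbn in Hlt. lia.
  - rewrite Nat2Z.inj_succ, Z.pow_succ_r in Hlt by lia.
    assert (IH' := IH v' Ho' ltac:(lia)). pose proof (tcount_irred_mul k n p v' Hp).
    rewrite Nat.pow_succ_r'. nia.
Qed.

Definition gpow (z : gauss) (j : nat) : gauss := Nat.iter j (gmul z) gone.

Lemma tcount_one_plus_i_pow_le k n j v :
  (tcount k n (gmul (gpow one_plus_i j) v) <= k ^ j * tcount k n v)%nat.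
Proof.
  induction j as [|j IH].
  - change (gpow one_plus_i 0) with gone. replace (gmul gone v) with v by ring.
    rewrite Nat.pow_0_r. lia.
  - change (gpow one_plus_i (S j)) with (gmul one_plus_i (gpow one_plus_i j)).
    replace (gmul (gmul one_plus_i (gpow one_plus_i j)) v)
      with (gmul one_plus_i (gmul (gpow one_plus_i j) v)) by ring.
    pose proof (tcount_irred_mul k n _ (gmul (gpow one_plus_i j) v) irred_one_plus_i).
    rewrite Nat.pow_succ_r'. nia.
Qed.

(* [(1 + i)^2 = 2 i] *)
Lemma gpow_one_plus_i_even a :
  exists u, In u gunits /\ gpow one_plus_i (2 * a) = gmul (2 ^ Z.of_nat a, 0) u.
Proof.
  induction a as [|a [u [Hu E]]]; [exists gone; split; [cbn; tauto | reflexivity]|].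
  exists (gmul (0, 1) u). split; [apply gunit_mul; cbn; tauto|].
  replace (2 * S a)%nat with (S (S (2 * a))) by lia.
  change (gpow one_plus_i (S (S (2 * a))))
    with (gmul one_plus_i (gmul one_plus_i (gpow one_plus_i (2 * a)))).
  rewrite E, Nat2Z.inj_succ, Z.pow_succ_r by lia.
  destruct u. unfold one_plus_i, gmul. cbn [fst snd]. f_equal; ring.
Qed.

Lemma odd_sq_lt_pow5 h : (2 * Z.of_nat h + 1) * (2 * Z.of_nat h + 1) < 5 ^ Z.of_nat (S h).
Proof.
  induction h as [|h IH]; [reflexivity|].
  rewrite (Nat2Z.inj_succ (S h)), Z.pow_succ_r, Nat2Z.inj_succ by lia.
  rewrite Nat2Z.inj_succ in IH. nia.
Qed.

Lemma frak_t_le_pow k n a h : (1 <= k)%nat -> n = (2 ^ a * (2 * h + 1))%nat ->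
  (frak_t k n <= k ^ (2 * a + h))%nat.
Proof.
  intros Hk Hn. destruct (gpow_one_plus_i_even a) as [u [Hu E]].
  destruct (gunit_inv u Hu) as [u' [Hu' Eu]].
  set (v := gmul u' (Z.of_nat (2 * h + 1), 0)).
  assert (Hnv : @eq gauss (Z.of_nat n, 0) (gmul (gpow one_plus_i (2 * a)) v)).
  { rewrite E. unfold v.
    transitivity (gmul (gmul (2 ^ Z.of_nat a, 0) (gmul u' u)) (Z.of_nat (2 * h + 1), 0)).
    - rewrite Eu, Hn, Nat2Z.inj_mul, Nat2Z.inj_pow. unfold gmul, gone. cbn [fst snd].
      change (Z.of_nat 2) with 2. f_equal; ring.
    - ring. }
  assert (HvN : gN v = (2 * Z.of_nat h + 1) * (2 * Z.of_nat h + 1)).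
  { unfold v. rewrite gN_mul. apply gunits_N1 in Hu'. rewrite Hu'. unfold gN. cbn [fst snd]. lia. }
  assert (Hv : Z.odd (gN v) = true).
  { rewrite HvN, Z.odd_mul, Z.add_comm, Z.odd_add_mul_2. reflexivity. }
  rewrite frak_t_tcount, Hnv.
  pose proof (tcount_one_plus_i_pow_le k n (2 * a) v).
  pose proof (tcount_odd_le k n h v Hk Hv ltac:(rewrite HvN; apply odd_sq_lt_pow5)).
  rewrite Nat.pow_add_r. nia.
Qed.

Lemma nat_two_adic n : (1 <= n)%nat -> exists a h, n = (2 ^ a * (2 * h + 1))%nat.
Proof.
  induction n as [n IH] using (well_founded_induction lt_wf). intros Hn.
  destruct (Nat.Even_or_Odd n) as [[m Hm]|[m Hm]].
  - destruct (IH m ltac:(lia) ltac:(lia)) as [a [h E]]. exists (S a), h. cbn. lia.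
  - exists 0%nat, m. cbn. lia.
Qed.

Lemma two_adic_exponent_le a h : ~ (a = 1 /\ h = 0)%nat -> ~ (a = 2 /\ h = 0)%nat ->
  (4 * (2 * a + h) <= 3 * (2 ^ a * (2 * h + 1)))%nat.
Proof.
  intros H1 H2. destruct (Nat.le_gt_cases 3 a) as [Ha|Ha].
  - assert (H8 : (8 * a <= 3 * 2 ^ a)%nat).
    { induction Ha as [|a Ha IH]; [cbn; lia|]. rewrite Nat.pow_succ_r'. lia. }
    pose proof (Nat.pow_nonzero 2 a). nia.
  - destruct a as [|[|[|a]]]; cbn; lia.
Qed.

(* Outside [n = 2, 4]: [t^4 <= k^(4e) <= k^(3n) <= c^(2n)], using [k^3 <= c^2]. *)
Lemma frak_t_sq_le_generic k n c : (2 <= k)%nat -> (2 * c = k * (k + 1))%nat ->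
  (1 <= n)%nat -> n <> 2%nat -> n <> 4%nat -> (frak_t k n * frak_t k n <= c ^ n)%nat.
Proof.
  intros Hk Hc Hn H2 H4. destruct (nat_two_adic n Hn) as [a [h E]].
  assert (Ht := frak_t_le_pow k n a h ltac:(lia) E).
  assert (He : (4 * (2 * a + h) <= 3 * n)%nat)
    by (rewrite E; apply two_adic_exponent_le; intros [-> ->]; cbn in E; lia).
  set (e := (2 * a + h)%nat) in *. set (t := frak_t k n) in *.
  assert (Hk3 : (k ^ 3 <= c ^ 2)%nat) by (cbn; nia).
  assert (H1 : (t * t * (t * t) <= k ^ (4 * e))%nat).
  { replace (4 * e)%nat with (e + e + (e + e))%nat by lia. rewrite !Nat.pow_add_r.
    apply Nat.mul_le_mono; apply Nat.mul_le_mono; lia. }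
  assert (H2' : (k ^ (4 * e) <= c ^ (2 * n))%nat).
  { apply (Nat.le_trans _ (k ^ (3 * n))); [apply Nat.pow_le_mono_r; lia|].
    rewrite !Nat.pow_mul_r. now apply Nat.pow_le_mono_l. }
  replace (2 * n)%nat with (n + n)%nat in H2' by lia. rewrite Nat.pow_add_r in H2'.
  apply Nat.square_le_mono. lia.
Qed.

(* Up to units, [(1,0), (1,1), (2,0), (2,2), (4,0)] are the powers [(1+i)^j] for
   [j <= 4], which have [binom(k+j-1, j)] factorizations. *)
Lemma tcount_two_table k :
  tcount k 2 (1, 0) = 1%nat /\ tcount k 2 (1, 1) = k /\
  (2 * tcount k 2 (2, 0)%Z = k * (k + 1))%nat.
Proof.
  induction k as [|k [IH0 [IH1 IH2]]]; [vm_compute; auto|].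
  rewrite !tcount_succ by discriminate. cbv -[tcount Nat.add Nat.mul].
  rewrite IH0, IH1. nia.
Qed.

Lemma tcount_four_table k :
  tcount k 4 (1, 0) = 1%nat /\ tcount k 4 (1, 1) = k /\
  (2 * tcount k 4 (2, 0)%Z = k * (k + 1))%nat /\
  (6 * tcount k 4 (2, 2)%Z = k * (k + 1) * (k + 2))%nat /\
  (24 * tcount k 4 (4, 0)%Z = k * (k + 1) * (k + 2) * (k + 3))%nat.
Proof.
  induction k as [|k [IH0 [IH1 [IH2 [IH3 IH4]]]]]; [vm_compute; auto|].
  rewrite !tcount_succ by discriminate. cbv -[tcount Nat.add Nat.mul].
  rewrite IH0, IH1. repeat split; nia.
Qed.

Lemma frak_t_two k : (2 * frak_t k 2 = k * (k + 1))%nat.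
Proof. apply tcount_two_table. Qed.

Lemma frak_t_four k : (24 * frak_t k 4 = k * (k + 1) * (k + 2) * (k + 3))%nat.
Proof. apply tcount_four_table. Qed.

Lemma frak_t_sq_le k n : (2 <= k)%nat -> (1 <= n)%nat ->
  (frak_t k n * frak_t k n <= frak_t k 2 ^ n)%nat.
Proof.
  intros Hk Hn. assert (Hc := frak_t_two k).
  destruct (Nat.eq_dec n 2) as [->|H2]; [cbn; lia|].
  destruct (Nat.eq_dec n 4) as [->|H4]; [|now apply frak_t_sq_le_generic].
  assert (H4 := frak_t_four k).
  assert (frak_t k 4 <= frak_t k 2 * frak_t k 2)%nat by nia. cbn. nia.
Qed.

Close Scope Z_scope.
Open Scope R_scope.

Lemma C_succ_2 m c : (1 <= m)%nat -> (2 * c = m * (m + 1))%nat -> C (m + 1) 2 = INR c.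
Proof.
  intros Hm Hc. destruct m as [|m]; [lia|].
  unfold C. replace (S m + 1 - 2)%nat with m by lia. replace (S m + 1)%nat with (S (S m)) by lia.
  rewrite !fact_simpl. change (fact 0) with 1%nat.
  apply (f_equal INR) in Hc. rewrite !mult_INR, plus_INR in *. rewrite !S_INR in *.
  pose proof (INR_fact_neq_0 m). cbn [INR] in *. field_simplify; [lra | auto].
Qed.

Lemma ln_le x y : 0 < x -> x <= y -> ln x <= ln y.
Proof.
  intros Hx [Hxy|<-]; [now left; apply ln_increasing | lra].
Qed.

(* [ln 0 = 0] in Rocq, so a zero count also satisfies the bound. *)
Lemma ln_div_le_of_sq_le t c n : (1 <= c)%nat -> (1 <= n)%nat -> (t * t <= c ^ n)%nat ->
  ln (INR t) / INR n <= / 2 * ln (INR c).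
Proof.
  intros Hc Hn Ht.
  assert (Hn' : 0 < INR n) by (apply lt_0_INR; lia).
  assert (Hc' : 0 <= ln (INR c)) by (rewrite <- ln_1; apply ln_le; [lra | now apply (le_INR 1)]).
  apply (Rmult_le_reg_r (2 * INR n)); [lra|].
  replace (/ 2 * ln (INR c) * (2 * INR n)) with (INR n * ln (INR c)) by field.
  destruct t as [|t].
  - change (INR 0) with 0. replace (ln 0) with 0
      by (unfold ln; destruct (Rlt_dec 0 0) as [H0|]; [destruct (Rlt_irrefl 0 H0) | reflexivity]).
    unfold Rdiv. rewrite !Rmult_0_l. nra.
  - replace (ln (INR (S t)) / INR n * (2 * INR n)) with (INR 2 * ln (INR (S t)))
      by (cbn; field; lra).
    assert (Ht' : 0 < INR (S t)) by (apply lt_0_INR; lia).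
    rewrite <- !ln_pow by (apply lt_0_INR; lia || lra).
    apply ln_le; [apply pow_lt, Ht'|]. rewrite <- !pow_INR. apply le_INR. cbn. lia.
Qed.

Theorem lemma4 (k : nat) (hk : (2 <= k)%nat) :
  (forall n : nat, (1 <= n)%nat ->
     ln (INR (frak_t k n)) / INR n <= / 2 * ln (C (k + 1) 2)) /\
  (exists n : nat, (1 <= n)%nat /\
     ln (INR (frak_t k n)) / INR n = / 2 * ln (C (k + 1) 2)).
Proof.
  assert (Hc := frak_t_two k).
  rewrite (C_succ_2 k (frak_t k 2)) by (auto || lia).
  split.
  - intros n Hn. apply ln_div_le_of_sq_le; auto using frak_t_sq_le. nia.
  - exists 2%nat. split; [lia|]. cbn [INR]. field.
Qed.
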